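(* In the setting of the context, suppose for every $i\in\mathcal D$: $k^C_{1,i}<1$, $k^C_{2,i}<R^C_{ti}$, $k^C_{3,i}>0$, $k^V_{1,i}<1$, $k^V_{2,i}<R^V_{ti}$, $0<k^V_{3,i}<\frac{1}{L^V_{ti}}(k^V_{1,i}-1)(k^V_{2,i}-R^V_{ti})$. Fix $\bar\sigma>0$ and put $\eta_i=\bar\sigma C_{ti}$, $p^C_{22,i}=\frac{L^C_{ti}\eta_i}{C_{ti}(1-k^C_{1,i})}$, $h_i=L^V_{ti}k^V_{3,i}-(k^V_{1,i}-1)(k^V_{2,i}-R^V_{ti})$, $$P_i=\mathrm{blockdiag}\Big(\eta_i,\;\begin{bmatrix}p^C_{22,i}&0\\0&\frac{k^C_{3,i}}{L^C_{ti}}p^C_{22,i}\end{bmatrix},\;\frac{\eta_i}{C_{ti}h_i}\begin{bmatrix}L^V_{ti}(k^V_{2,i}-R^V_{ti})&L^V_{ti}k^V_{3,i}\\L^V_{ti}k^V_{3,i}&k^V_{3,i}(k^V_{1,i}-1)\end{bmatrix}\Big),$$ and $\mathbf P=\mathrm{diag}(P_1,\dots,P_N)$. Then $\mathbf F^T\mathbf P+\mathbf P\mathbf F\le0$.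
   Context: Let $N\ge1$, $\mathcal D=\{1,\dots,N\}$, $\mathcal G_{el}$ an undirected graph on $\mathcal D$ with neighbor sets $\mathcal N_i$; for each $i$ let $C_{ti},L^C_{ti},R^C_{ti},L^V_{ti},R^V_{ti},R_{Li}>0$ and for each edge $R_{ij}=R_{ji}>0$. Let $$F_i=\begin{bmatrix}0&\frac{1}{C_{ti}}&0&\frac{1}{C_{ti}}&0\\ \frac{k^C_{1,i}-1}{L^C_{ti}}&\frac{k^C_{2,i}-R^C_{ti}}{L^C_{ti}}&\frac{k^C_{3,i}}{L^C_{ti}}&0&0\\ 0&-1&0&0&0\\ \frac{k^V_{1,i}-1}{L^V_{ti}}&0&0&\frac{k^V_{2,i}-R^V_{ti}}{L^V_{ti}}&\frac{k^V_{3,i}}{L^V_{ti}}\\ -1&0&0&0&0\end{bmatrix},$$ $e_1=(1,0,0,0,0)^T$, and let $\mathbf F\in\mathbb{R}^{5N\times5N}$ (closed-loop matrix of the cluster of microgrids) have $(i,i)$ block $F_i-\Big(\frac{1}{R_{Li}C_{ti}}+\sum_{j\in\mathcal N_i}\frac{1}{R_{ij}C_{ti}}\Big)e_1e_1^T$ and $(i,j)$ block ($j\ne i$) equal to $\frac{1}{R_{ij}C_{ti}}e_1e_1^T$ if $j\in\mathcal N_i$, $0$ otherwise. Block sizes in $\mathrm{blockdiag}$ are $1,2,2$. Matrix inequalities are in the semidefinite sense. *)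

From HB Require Import structures.
From mathcomp Require Import all_boot all_order all_algebra.
Set Implicit Arguments. Unset Strict Implicit. Unset Printing Implicit Defensive.
Import Order.TTheory GRing.Theory Num.Theory.
Local Open Scope ring_scope.

Definition nsd (R : realFieldType) (n : nat) (M : 'M[R]_n) : Prop :=
  forall x : 'cV[R]_n, (x^T *m M *m x) 0 0 <= 0.

Definition mk5 (R : nzRingType) (f : nat -> nat -> R) : 'M[R]_5 :=
  \matrix_(a < 5, b < 5) f (a : nat) (b : nat).

Definition e1 (R : nzRingType) : 'cV[R]_5 := delta_mx 0 0.

Definition Fi (R : realFieldType) (Ct LCt RCt LVt RVt kC1 kC2 kC3 kV1 kV2 kV3 : R)
  : 'M[R]_5 :=
  mk5 (fun a b =>
    match a, b with
    | 0%N, 1%N => 1 / Ct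
    | 0%N, 3%N => 1 / Ct
    | 1%N, 0%N => (kC1 - 1) / LCt
    | 1%N, 1%N => (kC2 - RCt) / LCt
    | 1%N, 2%N => kC3 / LCt
    | 2%N, 1%N => -1
    | 3%N, 0%N => (kV1 - 1) / LVt
    | 3%N, 3%N => (kV2 - RVt) / LVt
    | 3%N, 4%N => kV3 / LVt
    | 4%N, 0%N => -1
    | _, _ => 0
    end).

(* The closed-loop matrix of the cluster, as an N x N block matrix of 5x5 blocks.
   Neighbour sets: N_i = [pred j | e i j]. *)
Definition Fcl (R : realFieldType) (N : nat) (e : rel 'I_N)
  (Ct LCt RCt LVt RVt RL : 'I_N -> R) (Rl : 'I_N -> 'I_N -> R)
  (kC1 kC2 kC3 kV1 kV2 kV3 : 'I_N -> R)
  : 'M[R]_(\sum_(i < N) 5) :=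
  \mxblock_(i < N, j < N)
    (if i == j then
       Fi (Ct i) (LCt i) (RCt i) (LVt i) (RVt i)
          (kC1 i) (kC2 i) (kC3 i) (kV1 i) (kV2 i) (kV3 i)
       - (1 / (RL i * Ct i) + \sum_(k < N | e i k) 1 / (Rl i k * Ct i))
           *: (e1 R *m (e1 R)^T)
     else if e i j then (1 / (Rl i j * Ct i)) *: (e1 R *m (e1 R)^T)
     else 0 : 'M[R]_5).

Definition Pi (R : realFieldType) (sigma : R)
  (Ct LCt RCt LVt RVt kC1 kC2 kC3 kV1 kV2 kV3 : R) : 'M[R]_5 :=
  let eta := sigma * Ct in
  let p22 := LCt * eta / (Ct * (1 - kC1)) in
  let h := LVt * kV3 - (kV1 - 1) * (kV2 - RVt) in
  let c := eta / (Ct * h) in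
  mk5 (fun a b =>
    match a, b with
    | 0%N, 0%N => eta
    | 1%N, 1%N => p22
    | 2%N, 2%N => kC3 / LCt * p22
    | 3%N, 3%N => c * (LVt * (kV2 - RVt))
    | 3%N, 4%N => c * (LVt * kV3)
    | 4%N, 3%N => c * (LVt * kV3)
    | 4%N, 4%N => c * (kV3 * (kV1 - 1))
    | _, _ => 0
    end).

Definition Pcl (R : realFieldType) (N : nat) (sigma : R)
  (Ct LCt RCt LVt RVt : 'I_N -> R) (kC1 kC2 kC3 kV1 kV2 kV3 : 'I_N -> R)
  : 'M[R]_(\sum_(i < N) 5) :=
  \mxdiag_(i < N)
    Pi sigma (Ct i) (LCt i) (RCt i) (LVt i) (RVt i)
       (kC1 i) (kC2 i) (kC3 i) (kV1 i) (kV2 i) (kV3 i).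

From HB Require Import structures.
From mathcomp Require Import all_boot all_order all_algebra.
From mathcomp Require Import ring lra.
Import Order.TTheory GRing.Theory Num.Theory.
Local Open Scope ring_scope.

(* Since P is symmetric, the form of F^T P + P F is twice that of P F, so it
   suffices to bound x^T P F x.  Both P and F are block matrices over the
   microgrids, with P block diagonal, so x^T P F x splits into the local forms
   x_i^T P_i F_i x_i plus the electrical coupling through the first
   coordinates v_i = (x_i)_1.  For the chosen P_i the local form collapses to
   sigma (k^C_2 - R^C)/(1 - k^C_1) x_2^2 + (sigma/h) ((k^V_2 - R^V) x_4 + k^V_3 x_5)^2,
   which is nonpositive because h < 0; the load terms contribute -sigma/R_L v_i^2,
   and the line terms form the negative semidefinite Laplacian form
   -(sigma/2) sum_{ij edge} (v_i - v_j)^2 / R_ij. *)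

Lemma nsd_lyapunov (R : realFieldType) (n : nat) (F P : 'M[R]_n) :
  P^T = P -> (forall x : 'cV[R]_n, (x^T *m P *m F *m x) 0 0 <= 0) ->
  nsd (F^T *m P + P *m F).
Proof.
move=> Psym PF_le0 x.
have FtP_PF : (x^T *m (F^T *m P) *m x) 0 0 = (x^T *m P *m F *m x) 0 0.
  by rewrite -[RHS]trace_mx11 -mxtrace_tr !trmx_mul trmxK Psym !mulmxA trace_mx11.
by rewrite mulmxDr mulmxDl mxE FtP_PF mulmxA -mulr2n pmulrn_lle0.
Qed.

Lemma form_mxdiag_mxblock (R : comNzRingType) (N : nat) (p_ : 'I_N -> nat)
    (D_ : forall i, 'M[R]_(p_ i)) (B_ : forall i j, 'M[R]_(p_ i, p_ j))
    (x : 'cV[R]_(\sum_i p_ i)) :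
  (x^T *m \mxdiag_i D_ i *m \mxblock_(i, j) B_ i j *m x) 0 0 =
  \sum_i \sum_j ((submxcol x i)^T *m D_ i *m B_ i j *m submxcol x j) 0 0.
Proof.
set X := submxcol x; rewrite -(submxcolK x) -/X tr_mxcol.
rewrite -[_ *m _ *m \mxblock_(i, j) _]mulmxA.
rewrite mul_mxdiag_mxblock mul_mxrow_mxblock mul_mxrow_mxcol summxE exchange_big.
by apply: eq_bigr => i _; rewrite mulmx_suml summxE; apply: eq_bigr => j _; rewrite mulmxA.
Qed.

Section Laplacian.
Variables (R : realFieldType) (N : nat) (e : rel 'I_N).
Variables (w : 'I_N -> 'I_N -> R) (v : 'I_N -> R).
Hypotheses (e_sym : forall i j, e i j = e j i) (e_irr : forall i, ~~ e i i).
Hypotheses (w_sym : forall i j, e i j -> w i j = w j i).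
Hypothesis (w_ge0 : forall i j, e i j -> 0 <= w i j).

Lemma laplacian_form_le0 :
  \sum_i \sum_j (if e i j then w i j * (v i * v j - v i * v i) else 0) <= 0.
Proof.
set S := \sum_i _.
have S2E : S *+ 2 = - \sum_i \sum_j (if e i j then w i j * (v i - v j) ^+ 2 else 0).
  rewrite mulr2n {2}/S exchange_big /= /S -big_split -sumrN; apply: eq_bigr => i _.
  rewrite -big_split -sumrN; apply: eq_bigr => j _.
  rewrite /= (e_sym j i); case eij: (e i j); last by rewrite addr0 oppr0.
  by rewrite (w_sym j i); [ring | rewrite e_sym].
rewrite -(pmulrn_lle0 _ (isT : 0 < 2)%N) S2E oppr_le0.
apply: sumr_ge0 => i _; apply: sumr_ge0 => j _.
by case eij: (e i j) => //; rewrite mulr_ge0 ?sqr_ge0 ?w_ge0.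
Qed.

Lemma laplacian_row_sum (d : R) (i : 'I_N) :
  \sum_j (if i == j then d - \sum_(k | e i k) w i k * v i * v i
          else if e i j then w i j * v i * v j else 0) =
  d + \sum_j (if e i j then w i j * (v i * v j - v i * v i) else 0).
Proof.
rewrite (bigD1 i) //= eqxx [in RHS](bigD1 i) //= (negbTE (e_irr i)) add0r -addrA.
congr (_ + _); rewrite big_mkcond (bigD1 i) //= (negbTE (e_irr i)) add0r.
rewrite addrC -sumrB; apply: eq_bigr => j; rewrite eq_sym => /negbTE ->.
by case: (e i j); rewrite ?subr0 //; ring.
Qed.

Lemma laplacian_coupled_form_le0 (d : 'I_N -> R) : (forall i, d i <= 0) ->
  \sum_i \sum_j (if i == j then d i - \sum_(k | e i k) w i k * v i * v i
                 else if e i j then w i j * v i * v j else 0) <= 0.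
Proof.
move=> d_le0; rewrite (eq_bigr _ (fun i _ => laplacian_row_sum (d i) i)) big_split /=.
have sum_d_le0 : \sum_i d i <= 0 by apply: sumr_le0 => i _; apply: d_le0.
by rewrite -oppr_ge0 opprD addr_ge0 ?oppr_ge0 ?laplacian_form_le0.
Qed.

End Laplacian.

Lemma sum_ord5 (R : nzRingType) (f : 'I_5 -> R) :
  \sum_(a < 5) f a = f ord0 + f (inord 1) + f (inord 2) + f (inord 3) + f (inord 4).
Proof.
rewrite !big_ord_recl big_ord0 addr0 !addrA.
by do !congr (_ + _); congr (f _); apply: val_inj; rewrite /= inordK.
Qed.

Lemma form_mk5 (R : comNzRingType) (f g : nat -> nat -> R) (u w : 'cV[R]_5) :
  (u^T *m mk5 f *m mk5 g *m w) 0 0 =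
  \sum_(c < 5) \sum_(b < 5) \sum_(a < 5) u a 0 * f a b * g b c * w c 0.
Proof.
rewrite mxE; apply: eq_bigr => c _; rewrite mxE big_distrl /=.
apply: eq_bigr => b _; rewrite !mxE !big_distrl /=.
by apply: eq_bigr => a _; rewrite !mxE.
Qed.

Section Microgrid.
Context {R : realFieldType} {sigma Ct LCt RCt LVt RVt kC1 kC2 kC3 kV1 kV2 kV3 : R}.
Let P := Pi sigma Ct LCt RCt LVt RVt kC1 kC2 kC3 kV1 kV2 kV3.
Let F := Fi Ct LCt RCt LVt RVt kC1 kC2 kC3 kV1 kV2 kV3.

Lemma Pi_sym : P^T = P.
Proof.
apply/matrixP => a b; rewrite mxE !mxE.
by case: a => [[|[|[|[|[|a]]]]] ?]; case: b => [[|[|[|[|[|b]]]]] ?].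
Qed.

Lemma Pi_Fi_form (u : 'cV[R]_5) :
  Ct != 0 -> LCt != 0 -> kC1 != 1 -> LVt != 0 ->
  LVt * kV3 - (kV1 - 1) * (kV2 - RVt) != 0 ->
  (u^T *m P *m F *m u) 0 0 =
  sigma * (kC2 - RCt) / (1 - kC1) * u (inord 1) 0 ^+ 2
  + sigma / (LVt * kV3 - (kV1 - 1) * (kV2 - RVt))
    * ((kV2 - RVt) * u (inord 3) 0 + kV3 * u (inord 4) 0) ^+ 2.
Proof.
move=> Ct_neq0 LCt_neq0 kC1_neq1 LVt_neq0 h_neq0.
rewrite form_mk5 !sum_ord5 !inordK //=; field.
by rewrite h_neq0 subr_eq0 eq_sym kC1_neq1 LVt_neq0 LCt_neq0 Ct_neq0.
Qed.

Lemma Pi_Fi_form_le0 (u : 'cV[R]_5) :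
  0 < sigma -> 0 < Ct -> 0 < LCt -> 0 < LVt ->
  kC1 < 1 -> kC2 < RCt -> kV3 < 1 / LVt * (kV1 - 1) * (kV2 - RVt) ->
  (u^T *m P *m F *m u) 0 0 <= 0.
Proof.
move=> sigma_gt0 Ct_gt0 LCt_gt0 LVt_gt0 kC1_lt1 kC2_lt kV3_lt.
have h_lt0 : LVt * kV3 - (kV1 - 1) * (kV2 - RVt) < 0.
  have : LVt * kV3 < LVt * (1 / LVt * (kV1 - 1) * (kV2 - RVt)) by rewrite ltr_pM2l.
  rewrite mul1r !mulrA mulfV ?gt_eqF // mul1r; lra.
rewrite Pi_Fi_form ?(gt_eqF sigma_gt0, gt_eqF Ct_gt0, gt_eqF LCt_gt0, gt_eqF LVt_gt0,
                     lt_eqF kC1_lt1, lt_eqF h_lt0) //.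
have C_le0 : sigma * (kC2 - RCt) / (1 - kC1) <= 0.
  by rewrite pmulr_lle0 ?invr_gt0 ?subr_gt0 // pmulr_rle0 // subr_le0 ltW.
have V_le0 : sigma / (LVt * kV3 - (kV1 - 1) * (kV2 - RVt)) <= 0.
  by rewrite pmulr_rle0 // invr_le0 ltW.
by rewrite -oppr_ge0 opprD addr_ge0 // -mulNr mulr_ge0 ?sqr_ge0 ?oppr_ge0.
Qed.

Lemma Pi_e1_form (c : R) (u w : 'cV[R]_5) :
  (u^T *m P *m (c *: (e1 R *m (e1 R)^T)) *m w) 0 0 =
  c * (sigma * Ct) * u ord0 0 * w ord0 0.
Proof.
have -> : c *: (e1 R *m (e1 R)^T) = mk5 (fun a b => if (a, b) is (0, 0)%N then c else 0).
  apply/matrixP => a b; rewrite !mxE big_ord1 !mxE.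
  by case: a b => [[|a] ?] [[|b] ?]; rewrite /= ?mulr1 ?mulr0 ?mul0r.
by rewrite form_mk5 !sum_ord5 !inordK //=; ring.
Qed.

End Microgrid.

Section Cluster.
Context {R : realFieldType} {N : nat} {e : rel 'I_N}.
Context {Ct LCt RCt LVt RVt RL : 'I_N -> R} {Rl : 'I_N -> 'I_N -> R}.
Context {kC1 kC2 kC3 kV1 kV2 kV3 : 'I_N -> R} {sigma : R}.
Hypotheses (Ct_neq0 : forall i, Ct i != 0) (RL_neq0 : forall i, RL i != 0).
Hypothesis (Rl_neq0 : forall i j, e i j -> Rl i j != 0).

Let P_ i := Pi sigma (Ct i) (LCt i) (RCt i) (LVt i) (RVt i)
              (kC1 i) (kC2 i) (kC3 i) (kV1 i) (kV2 i) (kV3 i).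
Let F_ i := Fi (Ct i) (LCt i) (RCt i) (LVt i) (RVt i)
              (kC1 i) (kC2 i) (kC3 i) (kV1 i) (kV2 i) (kV3 i).

Lemma cluster_block_form (X : 'I_N -> 'cV[R]_5) (i j : 'I_N) :
  ((X i)^T *m P_ i *m
     (if i == j then
        F_ i - (1 / (RL i * Ct i) + \sum_(k < N | e i k) 1 / (Rl i k * Ct i))
                 *: (e1 R *m (e1 R)^T)
      else if e i j then (1 / (Rl i j * Ct i)) *: (e1 R *m (e1 R)^T)
      else 0) *m X j) 0 0 =
  if i == j then
    ((X i)^T *m P_ i *m F_ i *m X i) 0 0 - sigma / RL i * X i ord0 0 * X i ord0 0
    - \sum_(k | e i k) sigma / Rl i k * X i ord0 0 * X i ord0 0
  else if e i j then sigma / Rl i j * X i ord0 0 * X j ord0 0 else 0.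
Proof.
have scale_form r : r != 0 -> 1 / (r * Ct i) * (sigma * Ct i) = sigma / r.
  by move=> r_neq0; field; rewrite Ct_neq0 r_neq0.
case: eqP => [<- | _]; last first.
  case eij: (e i j); last by rewrite mulmx0 mul0mx mxE.
  by rewrite Pi_e1_form scale_form ?Rl_neq0.
rewrite mulmxBr mulmxBl mxE [(- _ : 'M[R]_1) 0 0]mxE Pi_e1_form.
rewrite mulrDl big_distrl /= scale_form //.
rewrite !mulrDl !big_distrl /= opprD addrA; congr (_ - _); apply: eq_bigr => k eik.
by rewrite scale_form ?Rl_neq0.
Qed.

End Cluster.

Theorem proposition6 (R : realFieldType) (N : nat) (e : rel 'I_N)
  (Ct LCt RCt LVt RVt RL : 'I_N -> R) (Rl : 'I_N -> 'I_N -> R)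
  (kC1 kC2 kC3 kV1 kV2 kV3 : 'I_N -> R) (sigma : R) :
  (1 <= N)%N ->
  (forall i j, e i j = e j i) ->
  (forall i, ~~ e i i) ->
  (forall i, 0 < Ct i /\ 0 < LCt i /\ 0 < RCt i /\ 0 < LVt i /\ 0 < RVt i /\ 0 < RL i) ->
  (forall i j, e i j -> 0 < Rl i j /\ Rl i j = Rl j i) ->
  (forall i, kC1 i < 1 /\ kC2 i < RCt i /\ 0 < kC3 i /\ kV1 i < 1 /\ kV2 i < RVt i /\
             0 < kV3 i /\ kV3 i < 1 / LVt i * (kV1 i - 1) * (kV2 i - RVt i)) ->
  0 < sigma ->
  let F := Fcl e Ct LCt RCt LVt RVt RL Rl kC1 kC2 kC3 kV1 kV2 kV3 in
  let P := Pcl sigma Ct LCt RCt LVt RVt kC1 kC2 kC3 kV1 kV2 kV3 in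
  nsd (F^T *m P + P *m F).
Proof.
move=> _ e_sym e_irr params lines gains sigma_gt0 F P.
have Rl_gt0 i j : e i j -> 0 < Rl i j by case/lines.
have Ct_neq0 i : Ct i != 0 by have [/lt0r_neq0] := params i.
have RL_neq0 i : RL i != 0 by have [_ [_ [_ [_ [_ /lt0r_neq0]]]]] := params i.
have Rl_neq0 i j : e i j -> Rl i j != 0 by move/Rl_gt0/lt0r_neq0.
apply: nsd_lyapunov => [|x].
  by rewrite tr_mxdiag; apply: eq_mxdiag => i; apply: Pi_sym.
rewrite form_mxdiag_mxblock.
under eq_bigr => i _ do under eq_bigr => j _ do
  rewrite (cluster_block_form Ct_neq0 RL_neq0 Rl_neq0).
apply: (@laplacian_coupled_form_le0 _ _ _ (fun i k => sigma / Rl i k)) => //.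
- by move=> i j /lines[_ ->].
- by move=> i j /Rl_gt0 Rl_ij; rewrite ltW // divr_gt0.
move=> i; have [Ct_gt0 [LCt_gt0 [_ [LVt_gt0 [_ RL_gt0]]]]] := params i.
have [kC1_lt1 [kC2_lt [_ [_ [_ [_ kV3_lt]]]]]] := gains i.
rewrite lerBlDr add0r (le_trans (Pi_Fi_form_le0 _ sigma_gt0 Ct_gt0 LCt_gt0 LVt_gt0
                                 kC1_lt1 kC2_lt kV3_lt)) //.
by rewrite -mulrA -expr2 mulr_ge0 ?sqr_ge0 ?divr_ge0 ?ltW.
Qed.
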